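(* Let $\Lambda$ be a right Morita ring and $P$ a finite poset. Let $P^*$ be the poset obtained from $P$ by adding a largest element $*$, and let $\Lambda P^*$ be the incidence algebra. Let $\mathcal{S}=\operatorname{rep}_\Lambda P$ be the full subcategory of $\operatorname{Mod}\Lambda P^*$ consisting of the subspace representations of $P$, and $\mathcal{S}^{\mathrm{fin}}=\mathcal{S}\cap\operatorname{mod}\Lambda P^*$. Then $\mathcal{S}^{\mathrm{fin}}$ is functorially finite in $\operatorname{mod}\Lambda P^*$ with respect to $\mathcal{S}$; that is, every finitely generated $\Lambda P^*$-module $X$ has a right approximation $r:R(X)\to X$ with $R(X)\in\mathcal{S}^{\mathrm{fin}}$ such that every morphism $Z\to X$ with $Z\in\mathcal{S}$ factors through $r$, and a left approximation $l:X\to L(X)$ with $L(X)\in\mathcal{S}^{\mathrm{fin}}$ such that every morphism $X\to Z$ with $Z\in\mathcal{S}$ factors through $l$.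
   Context: A right Morita ring is an artinian ring such that the injective envelopes of simple right modules are finitely generated. The incidence algebra $\Lambda P^*$ is the free $\Lambda$-module with basis $\{(i,j): i\le j \text{ in } P^*\}$ with the usual multiplication; right $\Lambda P^*$-modules are identified with representations $X=(X_i,X_{ij})$ consisting of right $\Lambda$-modules $X_i$ ($i\in P^*$) and $\Lambda$-linear maps $X_{ij}:X_i\to X_j$ for $i\le j$ with $X_{ii}=\mathrm{id}$ and $X_{jk}X_{ij}=X_{ik}$; $X$ is finitely generated iff all $X_i$ are finitely generated $\Lambda$-modules. A subspace representation of $P$ is such a representation in which all maps $X_{ij}$ are monomorphisms. $\operatorname{Mod}$ / $\operatorname{mod}$ denote all / finitely generated right modules. *)

From HB Require Import structures.
From mathcomp Require Import all_boot all_order all_algebra.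
Set Implicit Arguments. Unset Strict Implicit. Unset Printing Implicit Defensive.
Import GRing.Theory.
Local Open Scope ring_scope.

(* Right R-modules are left modules over the converse ring R^c. *)
Notation rmodType R := (lmodType (R^c)%type).

Definition lin (R : pzRingType) (M N : lmodType R) (f : M -> N) : Prop :=
  forall (a : R) (x y : M), f (a *: x + y) = a *: f x + f y.

Definition submod (R : pzRingType) (M : lmodType R) (U : M -> Prop) : Prop :=
  U 0 /\ forall (a : R) (x y : M), U x -> U y -> U (a *: x + y).

Definition fin_gen (R : pzRingType) (M : lmodType R) : Prop :=
  exists s : seq M, forall x : M,
    exists c : seq R, x = \sum_(i < size s) c`_i *: s`_i.

Definition simple_mod (R : pzRingType) (M : lmodType R) : Prop :=
  (exists x : M, x != 0) /\
  forall U : M -> Prop, submod U -> (forall x, U x -> x = 0) \/ (forall x, U x).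

Definition injective_mod (R : pzRingType) (E : lmodType R) : Prop :=
  forall (A B : lmodType R) (m : A -> B) (g : A -> E),
    lin m -> injective m -> lin g ->
    exists h : B -> E, lin h /\ forall a, h (m a) = g a.

Definition essential_mono (R : pzRingType) (S E : lmodType R) (f : S -> E) : Prop :=
  [/\ lin f, injective f &
      forall U : E -> Prop, submod U -> (exists u, U u /\ u != 0) ->
        exists s, s != 0 /\ U (f s)].

Definition injective_envelope (R : pzRingType) (S E : lmodType R) (f : S -> E) :=
  essential_mono f /\ injective_mod E.

Definition right_ideal (R : pzRingType) (I : R -> Prop) : Prop :=
  [/\ I 0, forall x y, I x -> I y -> I (x - y) & forall x r, I x -> I (x * r)].

Definition right_artinian (R : pzRingType) : Prop :=
  forall I : nat -> R -> Prop,
    (forall n, right_ideal (I n)) ->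
    (forall n x, I n.+1 x -> I n x) ->
    exists N, forall n, (N <= n)%N -> forall x, I n x <-> I N x.

Definition right_Morita (R : pzRingType) : Prop :=
  right_artinian R /\
  forall S : rmodType R, simple_mod S ->
    exists (E : rmodType R) (f : S -> E), injective_envelope f /\ fin_gen E.

(* P^* = option P, with None the added largest element *. *)
Definition leS (d : Order.disp_t) (P : finPOrderType d) (i j : option P) : bool :=
  match j, i with
  | None, _ => true
  | Some _, None => false
  | Some j', Some i' => (i' <= j')%O
  end.

(* Right Lambda P^*-modules, as representations (X_i, X_ij). *)
Record rep (R : pzRingType) (d : Order.disp_t) (P : finPOrderType d) := Rep {
  rep_obj : option P -> rmodType R;
  rep_map : forall i j : option P, leS i j -> rep_obj i -> rep_obj j;
  rep_lin : forall i j (h : leS i j), lin (rep_map h);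
  rep_id : forall i (h : leS i i) x, rep_map h x = x;
  rep_comp : forall i j k (hij : leS i j) (hjk : leS j k) (hik : leS i k) x,
      rep_map hjk (rep_map hij x) = rep_map hik x }.
Arguments rep_obj {R d P} r i.
Arguments rep_map {R d P} r {i j} h _.

(* Morphisms of representations = Lambda P^*-module homomorphisms. *)
Record rep_hom (R : pzRingType) (d : Order.disp_t) (P : finPOrderType d)
    (X Y : rep R P) := Hom {
  hom_fun : forall i, rep_obj X i -> rep_obj Y i;
  hom_lin : forall k, lin (@hom_fun k);
  hom_nat : forall i j (h : leS i j) x,
      @hom_fun j (rep_map X h x) = rep_map Y h (@hom_fun i x) }.
Arguments hom_fun {R d P X Y} _ i _.

Definition subspace_rep (R : pzRingType) (d : Order.disp_t) (P : finPOrderType d)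
  (X : rep R P) : Prop :=
  forall i j (h : leS i j), injective (rep_map X h).

Definition fg_rep (R : pzRingType) (d : Order.disp_t) (P : finPOrderType d)
  (X : rep R P) : Prop :=
  forall i, fin_gen (rep_obj X i).

From Pilot Require Import Defs.
From HB Require Import structures.
From mathcomp Require Import all_boot all_order all_algebra.
From mathcomp Require Import boolp.
Set Implicit Arguments. Unset Strict Implicit. Unset Printing Implicit Defensive.
Import GRing.Theory.
Local Open Scope ring_scope.

(* An artinian ring makes finitely generated modules artinian, so every
   nonzero submodule of such a module M contains a minimal nonzero, hence
   simple, submodule.  Over a right Morita ring simple modules embed into
   finitely generated injective modules; extending such an embedding from a
   simple submodule of the kernel of a map M -> E to all of M and pairing it
   with that map shrinks the kernel, so by well-foundedness M, and then all the
   X_m at once, embed into one finitely generated injective module E.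
   The left approximation replaces each X_i by its image in X_*.  The right
   approximation replaces X_i by the pairs (x, e) in X_i * E^P with
   e_m = iota_m (X_im x) for i <= m; a morphism from a subspace representation
   Z lifts because iota_m o f_m extends along the monomorphism Z_m -> Z_*. *)

Section Submodules.
Variables (K : pzRingType) (M : lmodType K).
Implicit Types (N U : M -> Prop) (x y : M).

Lemma submod0 U : submod U -> U 0.
Proof. by case. Qed.

Lemma submodD U x y : submod U -> U x -> U y -> U (x + y).
Proof. by move=> hU hx hy; have := hU.2 1 x y hx hy; rewrite scale1r. Qed.

Lemma submodZ U a x : submod U -> U x -> U (a *: x).
Proof. by move=> hU hx; have := hU.2 a x 0 hx (submod0 hU); rewrite addr0. Qed.

Lemma submodB U x y : submod U -> U x -> U y -> U (x - y).
Proof. by move=> hU hx hy; rewrite -scaleN1r addrC; apply: hU.2. Qed.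

Lemma zero_submod : submod (fun x : M => x = 0).
Proof. by split=> // a x y -> ->; rewrite scaler0 addr0. Qed.

Definition add_line N (a : M) : M -> Prop :=
  fun x => exists r y, N y /\ x = y + r *: a.

Fixpoint span_over N (s : seq M) : M -> Prop :=
  if s is a :: s' then span_over (add_line N a) s' else N.

Lemma add_line_submod N a : submod N -> submod (add_line N a).
Proof.
move=> hN; split; first by exists 0, 0; rewrite scale0r addr0; split; first exact: submod0.
move=> c _ _ [r [u [hu ->]]] [r' [u' [hu' ->]]].
exists (c * r + r'), (c *: u + u'); split; first exact: hN.2.
by rewrite scalerDr scalerDl scalerA addrACA.
Qed.

Lemma add_line_sub N a x : N x -> add_line N a x.
Proof. by move=> hx; exists 0, x; rewrite scale0r addr0. Qed.

Lemma span_over_submod s N : submod N -> submod (span_over N s).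
Proof. by elim: s N => [|a s IH] N hN //=; apply/IH/add_line_submod. Qed.

Lemma span_over_sub s N x : N x -> span_over N s x.
Proof. by elim: s N => [|a s IH] N hx //=; apply/IH/add_line_sub. Qed.

Lemma span_over_mem s N a : submod N -> a \in s -> span_over N s a.
Proof.
elim: s N => [|b s IH] N hN //=; rewrite inE => /orP [/eqP -> | ha].
  by apply: span_over_sub; exists 1, 0; rewrite scale1r add0r; split; first exact: submod0.
exact/IH/ha/add_line_submod.
Qed.

Lemma span_over_min s N U : submod U -> (forall x, N x -> U x) ->
  (forall a, a \in s -> U a) -> forall x, span_over N s x -> U x.
Proof.
elim: s N => [|b s IH] N hU hNU hs //=; apply: IH => // [x [r [y [hy ->]]]|a ha].
  by apply: submodD => //; [exact: hNU | apply: submodZ => //; exact/hs/mem_head].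
by apply: hs; rewrite inE ha orbT.
Qed.

Lemma span_over_decomp s N x : span_over N s x ->
  exists y (c : seq K), N y /\ x = y + \sum_(i < size s) c`_i *: s`_i.
Proof.
elim: s N x => [|a s IH] N x /=; first by exists x, [::]; rewrite big_ord0 addr0.
move=> /IH [_ [c [[r [y [hy ->]]] ->]]]; exists y, (r :: c); split=> //.
by rewrite big_ord_recl -addrA.
Qed.

Lemma span_over_combination s N y (c : seq K) : submod N -> N y ->
  span_over N s (y + \sum_(i < size s) c`_i *: s`_i).
Proof.
elim: s N y c => [|a s IH] N y c hN hy /=; first by rewrite big_ord0 addr0.
rewrite big_ord_recl addrA.
under eq_bigr => i _ do rewrite -nth_behead.
by apply: IH; [exact: add_line_submod | exists c`_0, y].
Qed.

Lemma fin_genP : fin_gen M <-> exists s, forall x, span_over (fun x => x = 0) s x.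
Proof.
split=> -[s hs]; exists s => x.
  have [c ->] := hs x; rewrite -[X in span_over _ _ X]add0r.
  exact: span_over_combination zero_submod _.
by have [y [c [-> ->]]] := span_over_decomp (hs x); exists c; rewrite add0r.
Qed.

End Submodules.

Definition descending (T : Type) (V : nat -> T -> Prop) : Prop :=
  forall n x, V n.+1 x -> V n x.

Definition stationary (T : Type) (V : nat -> T -> Prop) : Prop :=
  exists N, forall n, (N <= n)%N -> forall x, V n x <-> V N x.

Definition left_ideal (K : pzRingType) (I : K -> Prop) : Prop :=
  [/\ I 0, forall x y, I x -> I y -> I (x - y) & forall r x, I x -> I (r * x)].

Definition left_artinian (K : pzRingType) : Prop :=
  forall I : nat -> K -> Prop, (forall n, left_ideal (I n)) -> descending I -> stationary I.

Lemma right_artinian_conv (R : pzRingType) : right_artinian R -> left_artinian R^c.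
Proof.
move=> hart I hI; apply: (hart I) => n.
by case: (hI n) => h0 hB hM; split=> // x r; exact: hM.
Qed.

Lemma descending_le (T : Type) (V : nat -> T -> Prop) : descending V ->
  forall m n, (m <= n)%N -> forall x, V n x -> V m x.
Proof.
move=> hV m n /subnKC <-; elim: (n - m)%N => [|k IH] x; first by rewrite addn0.
by rewrite addnS => /hV /IH.
Qed.

Section Artinian.
Variables (K : pzRingType) (M : lmodType K).
Hypothesis hart : left_artinian K.

(* Induction on [s]: the chain [V n] meets the line through the first
   generator [a] in the chain of left ideals [{r | r *: a \in V n}], and its
   sums with that line form a chain of the same kind for the shorter list. *)
Lemma span_over_dcc s N (V : nat -> M -> Prop) : submod N ->
  (forall n, submod (V n)) -> descending V -> (forall n x, N x -> V n x) ->
  (forall n x, V n x -> span_over N s x) -> stationary V.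
Proof.
elim: s N V => [|a s IH] N V hN hV hdesc hNV hVs /=.
  by exists 0%N => n _ x; split => /hVs /= h; apply: hNV.
pose I n r := V n (r *: a).
have [k1 hk1] : stationary I.
  apply: hart => [n|n x]; last exact: hdesc.
  split; rewrite /I.
  - by rewrite scale0r; exact: submod0.
  - by move=> x y hx hy; rewrite scalerBl; exact: submodB.
  - by move=> r x hx; rewrite -scalerA; exact: submodZ.
pose U n := add_line (V n) a.
have [k2 hk2] : stationary U.
  apply: (IH (add_line N a)) => [|n|n x|n x|n x]; first exact: add_line_submod.
  - exact: add_line_submod.
  - by move=> [r [y [/hdesc hy ->]]]; exists r, y.
  - by move=> [r [y [hy ->]]]; exists r, y; split=> //; apply: hNV.
  move=> [r [y [hy ->]]].
  apply: (submodD (span_over_submod _ hN) (hVs n y hy)).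
  exact: submodZ (span_over_submod _ hN) (span_over_mem hN (mem_head _ _)).
exists (maxn k1 k2) => n hn x; split; first exact: (descending_le hdesc hn).
have hn1 := leq_trans (leq_maxl _ _) hn; have hn2 := leq_trans (leq_maxr _ _) hn.
move=> hx; have : U n x.
  by apply/(hk2 n hn2)/(hk2 (maxn k1 k2) (leq_maxr _ _)); exact: add_line_sub.
move=> [r [y [hy ex]]]; rewrite ex in hx *.
have hy' : V (maxn k1 k2) y by apply: (descending_le hdesc hn).
have hr : I (maxn k1 k2) r.
  by rewrite /I -[r *: a](addrK y) [_ + y]addrC; exact: submodB (hV _) hx hy'.
have : I n r by apply/(hk1 n hn1)/(hk1 (maxn k1 k2) (leq_maxl _ _)).
exact: submodD (hV n) hy.
Qed.

Lemma fin_gen_dcc (V : nat -> M -> Prop) : fin_gen M ->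
  (forall n, submod (V n)) -> descending V -> stationary V.
Proof.
move=> /fin_genP [s hs] hV hdesc; apply: (span_over_dcc (zero_submod M)) => //.
by move=> n x ->; exact: submod0.
Qed.

End Artinian.

Section SubmoduleType.
Variables (K : pzRingType) (M : lmodType K) (U : M -> Prop) (hU : submod U).

(* Indexing the carrier by the proof [hU] lets the instances below use it. *)
Definition submod_type of submod U := {x : M | U x}.
Local Notation sT := (submod_type hU).

HB.instance Definition _ := gen_eqMixin sT.
HB.instance Definition _ := gen_choiceMixin sT.

Lemma submod_val_inj (a b : sT) : sval a = sval b -> a = b.
Proof. by case: a b => a ha [b hb] /= e; subst; congr exist; exact: Prop_irrelevance. Qed.

Definition sub_zero : sT := exist _ 0 (submod0 hU).
Definition sub_add (a b : sT) : sT := exist _ _ (submodD hU (svalP a) (svalP b)).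
Definition sub_opp (a : sT) : sT := exist _ _ (submodZ (-1) hU (svalP a)).
Definition sub_scale k (a : sT) : sT := exist _ _ (submodZ k hU (svalP a)).

Lemma sub_addA : associative sub_add.
Proof. by move=> *; apply: submod_val_inj; rewrite /= addrA. Qed.
Lemma sub_addC : commutative sub_add.
Proof. by move=> *; apply: submod_val_inj; rewrite /= addrC. Qed.
Lemma sub_add0 : left_id sub_zero sub_add.
Proof. by move=> *; apply: submod_val_inj; rewrite /= add0r. Qed.
Lemma sub_addN : left_inverse sub_zero sub_opp sub_add.
Proof. by move=> *; apply: submod_val_inj; rewrite /= scaleN1r addNr. Qed.
HB.instance Definition _ := GRing.isZmodule.Build sT sub_addA sub_addC sub_add0 sub_addN.

Lemma sub_scaleA a b v : sub_scale a (sub_scale b v) = sub_scale (a * b) v.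
Proof. by apply: submod_val_inj; rewrite /= scalerA. Qed.
Lemma sub_scale1 : left_id 1 sub_scale.
Proof. by move=> *; apply: submod_val_inj; rewrite /= scale1r. Qed.
Lemma sub_scaleDr : right_distributive sub_scale +%R.
Proof. by move=> *; apply: submod_val_inj; rewrite /= scalerDr. Qed.
Lemma sub_scaleDl v : {morph sub_scale^~ v : a b / a + b}.
Proof. by move=> *; apply: submod_val_inj; rewrite /= scalerDl. Qed.
HB.instance Definition _ :=
  GRing.Zmodule_isLmodule.Build K sT sub_scaleA sub_scale1 sub_scaleDr sub_scaleDl.

Lemma submod_val_lin : lin (fun a : sT => sval a).
Proof. by []. Qed.

End SubmoduleType.

Section MinimalSubmodules.
Variables (K : pzRingType) (M : lmodType K).
Implicit Types (U V W : M -> Prop).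

Definition ltsub V W : Prop :=
  [/\ submod V, (forall x, V x -> W x) & exists x, W x /\ ~ V x].

Lemma fin_gen_submod_acc : left_artinian K -> fin_gen M ->
  forall W, submod W -> Acc ltsub W.
Proof.
move=> hart hfg W0 hW0; apply: contrapT => hnacc.
pose T := {W : M -> Prop | submod W /\ ~ Acc ltsub W}.
have step (t : T) : exists t' : T, ltsub (sval t') (sval t).
  case: t => W [hW hna] /=; apply: contrapT => hne; apply: hna; constructor => V hV.
  apply: contrapT => hVa; apply: hne.
  by exists (exist _ V (conj (let: And3 h _ _ := hV in h) hVa)).
have [next hnext] := choice step.
pose t0 : T := exist _ W0 (conj hW0 hnacc).
pose V n := sval (iter n next t0).
have hV n : submod (V n) by rewrite /V; case: (iter n next t0) => ? [].
have hdesc : descending V.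
  by move=> n x; rewrite /V /=; case: (hnext (iter n next t0)) => _ h _; exact: h.
have [k hk] := fin_gen_dcc hart hfg hV hdesc.
case: (hnext (iter k next t0)) => _ _ [x [hx hnx]].
by apply: hnx; apply/(hk k.+1 (leqnSn k)).
Qed.

Definition nonzero_sub V : Prop := exists x, V x /\ x <> 0.

Definition minimal_nonzero V : Prop := nonzero_sub V /\
  forall U, submod U -> (forall x, U x -> V x) -> nonzero_sub U -> forall x, V x -> U x.

Lemma exists_minimal_nonzero : (forall W, submod W -> Acc ltsub W) ->
  forall W, submod W -> nonzero_sub W ->
  exists V, [/\ submod V, minimal_nonzero V & forall x, V x -> W x].
Proof.
move=> hacc W hW; have hA := hacc W hW; move: hW; elim: hA => {}W _ IH hW hnz.
have [hmin|] := pselect (forall U, submod U -> (forall x, U x -> W x) -> nonzero_sub U ->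
   forall x, W x -> U x); first by exists W.
move=> /existsNP [U /not_implyP [hU /not_implyP [hUW /not_implyP [hUnz]]]].
move=> /existsNP [x /not_implyP [hx hnUx]].
have [V [hV hVmin hVU]] := IH U (And3 hU hUW (ex_intro _ x (conj hx hnUx))) hU hUnz.
by exists V; split=> // y /hVU /hUW.
Qed.

Lemma minimal_nonzero_simple V (hV : submod V) :
  minimal_nonzero V -> simple_mod (submod_type hV).
Proof.
move=> [[x [hx hx0]] hmin]; split.
  by exists (exist _ x hx : submod_type hV); apply/eqP => /(congr1 sval).
move=> U hU; pose U' y := exists h : V y, U (exist _ y h).
have hU' : submod U'.
  split; first by exists (submod0 hV); exact: hU.1.
  move=> a y z [hy uy] [hz uz]; exists (hV.2 a y z hy hz).
  have -> : exist _ (a *: y + z) (hV.2 a y z hy hz) =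
            a *: (exist _ y hy : submod_type hV) + exist _ z hz by exact: submod_val_inj.
  exact: hU.2.
have [[a [ha ha0]]|hno] := pselect (exists a, U a /\ a <> 0); [right | left].
  have hnz : nonzero_sub U'.
    exists (sval a); split; first by case: a ha {ha0} => y hy; exists hy.
    by move=> e; apply/ha0/submod_val_inj.
  move=> b; have [hb ub] := hmin U' hU' (fun y '(ex_intro h _) => h) hnz (sval b) (svalP b).
  by rewrite (_ : b = exist _ (sval b) hb) //; exact: submod_val_inj.
by move=> a ha; apply: contrapT => hne; apply: hno; exists a.
Qed.

End MinimalSubmodules.

Section ModuleConstructions.
Variable K : pzRingType.
Implicit Types (A B E : lmodType K).

Lemma lin0 A B (f : A -> B) : lin f -> f 0 = 0.
Proof.
move=> hf; have := hf 1 0 0; rewrite !scale1r addr0 => e.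
by apply: (addrI (f 0)); rewrite addr0 -e.
Qed.

Lemma linB A B (f : A -> B) x y : lin f -> f (x - y) = f x - f y.
Proof. by move=> hf; rewrite addrC -scaleN1r hf scaleN1r addrC. Qed.

Lemma lin_preimage_submod A B (f : A -> B) (C : B -> Prop) :
  lin f -> submod C -> submod (fun x => C (f x)).
Proof.
move=> hf hC; split; first by rewrite (lin0 hf); exact: submod0.
by move=> c x y hx hy; rewrite hf; exact: hC.2.
Qed.

Lemma span_image_sub A B (f : A -> B) (s : seq A) (C : B -> Prop) :
  lin f -> submod C -> (forall a, a \in s -> C (f a)) ->
  forall a, span_over (fun x => x = 0) s a -> C (f a).
Proof.
move=> hf hC hs; apply: span_over_min (lin_preimage_submod hf hC) _ hs.
by move=> _ ->; rewrite (lin0 hf); exact: submod0.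
Qed.

Lemma fin_gen_surj A B (f : A -> B) : lin f ->
  (forall b, exists a, f a = b) -> fin_gen A -> fin_gen B.
Proof.
move=> hf hsurj /fin_genP [s hs]; apply/fin_genP; exists (map f s) => b.
have [a <-] := hsurj b.
apply: (span_image_sub hf) (hs a); first exact/span_over_submod/zero_submod.
by move=> x hx; apply: span_over_mem (zero_submod B) (map_f f hx).
Qed.

Lemma fin_gen_prod E1 E2 : fin_gen E1 -> fin_gen E2 -> fin_gen (E1 * E2)%type.
Proof.
move=> /fin_genP [s1 h1] /fin_genP [s2 h2]; apply/fin_genP.
exists ([seq (e, 0) | e <- s1] ++ [seq (0, e) | e <- s2]) => -[x1 x2].
have hC := span_over_submod ([seq (e, 0) | e <- s1] ++ [seq (0, e) | e <- s2])
  (zero_submod (E1 * E2)%type).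
rewrite (_ : (x1, x2) = (x1, 0) + (0, x2)); last by congr pair; rewrite /= ?addr0 ?add0r.
apply: (submodD hC).
  apply: (span_image_sub (f := fun e => (e, 0 : E2)) _ hC _ (h1 x1)) => [c x y|a ha].
    by congr pair; rewrite /= ?scaler0 ?addr0.
  by apply: span_over_mem (zero_submod _) _; rewrite mem_cat map_f.
apply: (span_image_sub (f := fun e => (0 : E1, e)) _ hC _ (h2 x2)) => [c x y|a ha].
  by congr pair; rewrite /= ?scaler0 ?addr0.
by apply: span_over_mem (zero_submod _) _; rewrite mem_cat map_f ?orbT.
Qed.

Lemma fin_gen_ffun (I : finType) E : fin_gen E -> fin_gen {ffun I -> E}.
Proof.
move=> /fin_genP [s hs]; apply/fin_genP.
pose delta (i : I) (e : E) : {ffun I -> E} := [ffun j => if j == i then e else 0].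
have delta_lin i : lin (delta i).
  by move=> c x y; apply/ffunP => j; rewrite !ffunE; case: eqP; rewrite ?scaler0 ?addr0.
exists [seq delta i e | i <- enum I, e <- s] => f.
have hC := span_over_submod [seq delta i e | i <- enum I, e <- s] (zero_submod {ffun I -> E}).
have -> : f = \sum_i delta i (f i).
  apply/ffunP => j; rewrite sum_ffunE (bigD1 j) //= big1 ?addr0 ?ffunE ?eqxx //.
  by move=> i /negbTE hi; rewrite ffunE eq_sym hi.
apply: big_ind => [|x y|i _]; [exact: submod0 hC | exact: submodD hC |].
apply: (span_image_sub (delta_lin i)) (hs (f i)) => // a ha.
by apply: span_over_mem (zero_submod _) _; apply/allpairsP; exists (i, a); rewrite mem_enum.
Qed.

Lemma injective_mod_prod E1 E2 : injective_mod E1 -> injective_mod E2 ->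
  injective_mod (E1 * E2)%type.
Proof.
move=> h1 h2 A B m g hm im hg.
have [k1 [hk1 ek1]] := h1 A B m (fun a => (g a).1) hm im (fun c x y => congr1 fst (hg c x y)).
have [k2 [hk2 ek2]] := h2 A B m (fun a => (g a).2) hm im (fun c x y => congr1 snd (hg c x y)).
exists (fun b => (k1 b, k2 b)); split; first by move=> c x y; rewrite hk1 hk2.
by move=> a; rewrite ek1 ek2; case: (g a).
Qed.

Lemma injective_mod_ffun (I : finType) E : injective_mod E -> injective_mod {ffun I -> E}.
Proof.
move=> hE A B m g hm im hg.
have ext i : exists h : B -> E, lin h /\ forall a, h (m a) = g a i.
  by apply: hE => // c x y; rewrite hg !ffunE.
have [H hH] := choice ext.
exists (fun b => [ffun i => H i b]); split.
  by move=> c x y; apply/ffunP => i; rewrite !ffunE (proj1 (hH i)).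
by move=> a; apply/ffunP => i; rewrite ffunE (proj2 (hH i)).
Qed.

Definition zero_lmod : lmodType K := 'M[K]_(0, 0).

Lemma injective_mod_zero : injective_mod zero_lmod.
Proof.
move=> A B m g _ _ _; exists (fun _ => 0); split; first by move=> *; rewrite scaler0 addr0.
by move=> a; rewrite [g a]flatmx0.
Qed.

Lemma fin_gen_zero : fin_gen zero_lmod.
Proof. by exists [::] => x; exists [::]; rewrite big_ord0 flatmx0. Qed.

End ModuleConstructions.

Section Embedding.
Variable K : pzRingType.

Definition embeds_in_fg_injective (M : lmodType K) : Prop :=
  exists (E : lmodType K) (f : M -> E),
    [/\ lin f, injective f, injective_mod E & fin_gen E].

Definition kernel_in_fg_injective (M : lmodType K) (W : M -> Prop) : Prop :=
  exists (E : lmodType K) (h : M -> E),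
    [/\ lin h, injective_mod E, fin_gen E & forall x, h x = 0 <-> W x].

Lemma kernel_in_fg_injective_full (M : lmodType K) :
  kernel_in_fg_injective (fun _ : M => True).
Proof.
exists (zero_lmod K), (fun _ => 0); split.
- by move=> *; rewrite scaler0 addr0.
- exact: injective_mod_zero.
- exact: fin_gen_zero.
- by move=> x; split=> // _; rewrite [LHS]flatmx0.
Qed.

Lemma trivial_kernel_embeds (M : lmodType K) (W : M -> Prop) :
  kernel_in_fg_injective W -> ~ nonzero_sub W -> embeds_in_fg_injective M.
Proof.
move=> [E [h [hh hE hfE hker]]] hnz; exists E, h; split=> // x y e.
apply/eqP; rewrite -subr_eq0; apply/eqP; apply: contrapT => hne; apply: hnz.
by exists (x - y); split=> //; apply/hker; rewrite (linB _ _ hh) e subrr.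
Qed.

Hypothesis hart : left_artinian K.
Hypothesis simple_embeds :
  forall S : lmodType K, simple_mod S -> embeds_in_fg_injective S.

Lemma kernel_in_fg_injective_shrink (M : lmodType K) (W : M -> Prop) :
  fin_gen M -> submod W -> nonzero_sub W -> kernel_in_fg_injective W ->
  exists2 W', ltsub W' W & kernel_in_fg_injective W'.
Proof.
move=> hfg hW hnz [E [h [hh hE hfE hker]]].
have [V [hV hVmin hVW]] := exists_minimal_nonzero (fin_gen_submod_acc hart hfg) hW hnz.
have [ES [f [hf finj hES hfES]]] := simple_embeds (minimal_nonzero_simple hV hVmin).
have [k [hk ek]] := hES _ M _ f (@submod_val_lin _ _ _ hV) (@submod_val_inj _ _ _ hV) hf.
exists (fun x => W x /\ k x = 0).
  split.
  - split; first by split; [exact: submod0 | exact: lin0].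
    by move=> c x y [hx kx] [hy ky]; split; [exact: hW.2 | rewrite hk kx ky scaler0 addr0].
  - by move=> x [].
  - case: hVmin => -[x [hx hx0]] _; exists x; split; first exact: hVW.
    move=> [_ kx]; apply: hx0.
    have : f (exist _ x hx) = f 0 by rewrite (lin0 hf) -ek.
    by move/finj/(congr1 sval).
exists (E * ES)%type, (fun x => (h x, k x)); split.
- by move=> c x y; rewrite hh hk.
- exact: injective_mod_prod.
- exact: fin_gen_prod.
- move=> x; split; last by move=> [/hker -> ->].
  by move=> e; split; [apply/hker; exact: (congr1 fst e) | exact: (congr1 snd e)].
Qed.

Lemma fin_gen_embeds (M : lmodType K) : fin_gen M -> embeds_in_fg_injective M.
Proof.
move=> hfg; have hT : submod (fun _ : M => True) by [].
move: (kernel_in_fg_injective_full M); have hA := fin_gen_submod_acc hart hfg hT.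
move: hT; elim: hA => W _ IH hW hker.
have [hnz|] := pselect (nonzero_sub W); last exact: trivial_kernel_embeds hker.
have [W' hlt hker'] := kernel_in_fg_injective_shrink hfg hW hnz hker.
by apply: (IH W' hlt _ hker'); case: hlt.
Qed.

Lemma fin_gen_family_embeds (I : finType) (Mf : I -> lmodType K) :
  (forall i, fin_gen (Mf i)) ->
  exists (E : lmodType K) (iota : forall i, Mf i -> E),
    [/\ injective_mod E, fin_gen E & forall i, lin (iota i) /\ injective (iota i)].
Proof.
move=> hfg.
have [E [hE hfE hl]] : exists E : lmodType K, [/\ injective_mod E, fin_gen E &
    forall i, i \in enum I -> exists iota : Mf i -> E, lin iota /\ injective iota].
  elim: (enum I) => [|a s [E [hE hfE hl]]].
    by exists (zero_lmod K); split=> //; [exact: injective_mod_zero | exact: fin_gen_zero].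
  have [Ea [ia [hia iia hEa hfEa]]] := fin_gen_embeds (hfg a).
  exists (E * Ea)%type; split; [exact: injective_mod_prod | exact: fin_gen_prod |].
  move=> i; rewrite inE; case: (eqVneq i a) => [-> _ | _ /= /hl [ii [hii iii]]].
    exists (fun x => (0, ia x)); split; last by move=> x y [] /iia.
    by move=> c x y; rewrite hia; congr pair; rewrite /= scaler0 addr0.
  exists (fun x => (ii x, 0)); split; last by move=> x y [] /iii.
  by move=> c x y; rewrite hii; congr pair; rewrite /= scaler0 addr0.
have hl' i : exists iota : Mf i -> E, lin iota /\ injective iota.
  by apply: hl; rewrite mem_enum.
by exists E, (fun i => sval (cid (hl' i))); split=> // i; exact: svalP (cid (hl' i)).
Qed.

End Embedding.

Section Representations.
Variables (R : pzRingType) (d : Order.disp_t) (P : finPOrderType d).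

Lemma leS_refl (i : option P) : leS i i.
Proof. by case: i => //= i; exact: Order.POrderTheory.lexx. Qed.

Lemma leS_trans (i j k : option P) : leS i j -> leS j k -> leS i k.
Proof.
case: k => [k|] //; case: j => [j|] //; case: i => [i|] //=.
exact: Order.POrderTheory.le_trans.
Qed.

Section LeftApproximation.
Variable X : rep R P.

Definition top_image (j : option P) (y : rep_obj X None) : Prop :=
  exists x, y = rep_map X (isT : leS j None) x.

Lemma top_image_submod j : submod (top_image j).
Proof.
split; first by exists 0; rewrite (lin0 (rep_lin (isT : leS j None))).
by move=> a _ _ [x ->] [y ->]; exists (a *: x + y); rewrite rep_lin.
Qed.

Lemma top_image_mono j k (h : leS j k) y : top_image j y -> top_image k y.
Proof. by move=> [x ->]; exists (rep_map X h x); rewrite rep_comp. Qed.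

Definition LXobj j : rmodType R := submod_type (top_image_submod j).

Definition LXmap j k (h : leS j k) (a : LXobj j) : LXobj k :=
  exist _ (sval a) (top_image_mono h (svalP a)).

Lemma LXmap_lin j k (h : leS j k) : lin (LXmap h).
Proof. by move=> c x y; apply: submod_val_inj. Qed.
Lemma LXmap_id j (h : leS j j) a : LXmap h a = a.
Proof. exact: submod_val_inj. Qed.
Lemma LXmap_comp i j k (hij : leS i j) (hjk : leS j k) (hik : leS i k) a :
  LXmap hjk (LXmap hij a) = LXmap hik a.
Proof. exact: submod_val_inj. Qed.

Definition LX : rep R P := Rep LXmap_lin LXmap_id LXmap_comp.

Definition to_top j (x : rep_obj X j) : LXobj j :=
  exist _ (rep_map X (isT : leS j None) x) (ex_intro _ x erefl).
Lemma to_top_lin j : lin (@to_top j).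
Proof. by move=> c x y; apply: submod_val_inj => /=; rewrite rep_lin. Qed.
Lemma to_top_nat i j (h : leS i j) x : to_top (rep_map X h x) = LXmap h (to_top x).
Proof. by apply: submod_val_inj => /=; rewrite rep_comp. Qed.

Definition to_LX : rep_hom X LX :=
  @Defs.Hom _ _ _ X LX (fun j => @to_top j) to_top_lin to_top_nat.

Lemma LX_subspace : subspace_rep LX.
Proof. by move=> i j h a b /(congr1 sval) e; apply: submod_val_inj. Qed.

Lemma LX_fg : fg_rep X -> fg_rep LX.
Proof.
move=> hfg j; apply: (fin_gen_surj (@to_top_lin j)) (hfg j).
by move=> [y [x hx]]; exists x; apply: submod_val_inj.
Qed.

(* A morphism into a subspace representation is determined by its component
   at the top, and [f_*] sends the image of [X_j] into that of [Z_j]. *)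
Lemma LX_factor (Z : rep R P) (f : rep_hom X Z) : subspace_rep Z ->
  exists g : rep_hom LX Z, forall i x, hom_fun g i (hom_fun to_LX i x) = hom_fun f i x.
Proof.
move=> hZ.
have ex j (a : LXobj j) :
    exists z, rep_map Z (isT : leS j None) z = hom_fun f None (sval a).
  by case: a => y [x ex] /=; rewrite ex; exists (hom_fun f j x); rewrite (hom_nat f).
pose g j a := sval (cid (ex j a)).
have hg j a : rep_map Z (isT : leS j None) (g j a) = hom_fun f None (sval a).
  exact: svalP (cid (ex j a)).
have g_lin j : lin (g j).
  by move=> c x y; apply: (hZ j None isT); rewrite rep_lin !hg (hom_lin f).
have g_nat i j (h : leS i j) a : g j (LXmap h a) = rep_map Z h (g i a).
  by apply: (hZ j None isT); rewrite hg rep_comp hg.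
exists (@Defs.Hom _ _ _ LX Z g g_lin g_nat) => i x /=; apply: (hZ i None isT).
by rewrite hg /= (hom_nat f).
Qed.

End LeftApproximation.

Section RightApproximation.
Local Unset Implicit Arguments.
Variables (X : rep R P) (E : rmodType R) (iota : forall m : P, rep_obj X (Some m) -> E).
Hypotheses (iota_lin : forall m, lin (iota m)) (iota_inj : forall m, injective (iota m)).
Local Set Implicit Arguments.

Definition compatible (j : option P) (p : rep_obj X j * {ffun P -> E}) : Prop :=
  forall m (h : leS j (Some m)), p.2 m = iota m (rep_map X h p.1).

Lemma compatible_submod j : submod (@compatible j).
Proof.
split=> [m h|a p q hp hq m h]; first by rewrite ffunE (lin0 (rep_lin h)) (lin0 (iota_lin m)).
by rewrite ffunE /= rep_lin iota_lin ffunE hp hq.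
Qed.

Lemma compatible_map j k (h : leS j k) p :
  compatible p -> compatible (rep_map X h p.1, p.2).
Proof.
move=> hp m hkm /=; have hjm := leS_trans h hkm.
by rewrite (hp m hjm) (rep_comp h hkm hjm).
Qed.

Definition RXobj j : rmodType R := submod_type (compatible_submod j).

Definition RXmap j k (h : leS j k) (a : RXobj j) : RXobj k :=
  exist _ _ (compatible_map h (svalP a)).

Lemma RXmap_lin j k (h : leS j k) : lin (RXmap h).
Proof. by move=> c x y; apply: submod_val_inj => /=; rewrite rep_lin. Qed.
Lemma RXmap_id j (h : leS j j) a : RXmap h a = a.
Proof. by apply: submod_val_inj => /=; rewrite rep_id; case: (sval a). Qed.
Lemma RXmap_comp i j k (hij : leS i j) (hjk : leS j k) (hik : leS i k) a :
  RXmap hjk (RXmap hij a) = RXmap hik a.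
Proof. by apply: submod_val_inj => /=; rewrite rep_comp. Qed.

Definition RX : rep R P := Rep RXmap_lin RXmap_id RXmap_comp.

Definition from_RX_fun j (a : RXobj j) : rep_obj X j := (sval a).1.
Lemma from_RX_lin j : lin (@from_RX_fun j).
Proof. by []. Qed.
Lemma from_RX_nat i j (h : leS i j) a :
  from_RX_fun (RXmap h a) = rep_map X h (from_RX_fun a).
Proof. by []. Qed.

Definition from_RX : rep_hom RX X :=
  @Defs.Hom _ _ _ RX X (fun j => @from_RX_fun j) from_RX_lin from_RX_nat.

(* At [Some i] the coordinate [e_i = iota_i x] recovers [x]; [RX_*] maps
   only to itself. *)
Lemma RX_subspace : subspace_rep RX.
Proof.
move=> i j h [[x e] hx] [[y e'] hy] /(congr1 sval) [exy ee]; subst e'.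
apply: submod_val_inj => /=; congr pair.
case: i h x y hx hy exy => [i|] h x y hx hy exy; last first.
  by case: j h exy => // h; rewrite !rep_id.
apply: (iota_inj i); have hii := leS_refl (Some i).
by rewrite -(rep_id hii x) -(rep_id hii y) -(hx i hii) -(hy i hii).
Qed.

Lemma RX_fg : fin_gen E -> fg_rep X -> fg_rep RX.
Proof.
move=> hfE hfg j.
pose fix_coord (p : rep_obj X j * {ffun P -> E}) : {ffun P -> E} :=
  [ffun m => if pselect (leS j (Some m)) is left h then iota m (rep_map X h p.1) else p.2 m].
have hfix p : compatible (p.1, fix_coord p).
  move=> m h; rewrite ffunE; case: pselect => [h'|//].
  by rewrite (Prop_irrelevance h' h).
pose phi p : RXobj j := exist _ _ (hfix p).
have phi_lin : lin phi.
  move=> c x y; apply: submod_val_inj => /=; congr pair; apply/ffunP => m; rewrite !ffunE.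
  by case: pselect => // h; rewrite rep_lin iota_lin.
apply: (fin_gen_surj phi_lin); last exact: fin_gen_prod (hfg j) (fin_gen_ffun _ hfE).
move=> [[x e] hx]; exists (x, e); apply: submod_val_inj => /=; congr pair.
by apply/ffunP => m; rewrite ffunE; case: pselect => // h; rewrite (hx m h).
Qed.

Lemma RX_factor (Z : rep R P) (f : rep_hom Z X) : injective_mod E -> subspace_rep Z ->
  exists g : rep_hom Z RX, forall i z, hom_fun from_RX i (hom_fun g i z) = hom_fun f i z.
Proof.
move=> hE hZ.
have ext m : exists H : rep_obj Z None -> E, lin H /\
    forall z, H (rep_map Z (isT : leS (Some m) None) z) = iota m (hom_fun f (Some m) z).
  apply: hE; [exact: rep_lin | exact: hZ |].
  by move=> c x y; rewrite (hom_lin f) iota_lin.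
have [H hH] := choice ext.
have hC j z : compatible (hom_fun f j z, [ffun m => H m (rep_map Z (isT : leS j None) z)]).
  by move=> m h; rewrite ffunE -(hom_nat f) -(proj2 (hH m)) rep_comp.
pose g j z : RXobj j := exist _ _ (hC j z).
have g_lin j : lin (g j).
  move=> c x y; apply: submod_val_inj => /=; congr pair; first by rewrite (hom_lin f).
  by apply/ffunP => m; rewrite !ffunE rep_lin (proj1 (hH m)).
have g_nat i j (h : leS i j) z : g j (rep_map Z h z) = RXmap h (g i z).
  apply: submod_val_inj => /=; congr pair; first by rewrite (hom_nat f).
  by apply/ffunP => m; rewrite !ffunE rep_comp.
by exists (@Defs.Hom _ _ _ Z RX g g_lin g_nat).
Qed.

End RightApproximation.

End Representations.

Lemma right_Morita_simple_embeds (R : pzRingType) : right_Morita R ->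
  forall S : rmodType R, simple_mod S -> embeds_in_fg_injective S.
Proof. by move=> [_ hmor] S /hmor [E [f [[[hf finj _] hE] hfE]]]; exists E, f. Qed.

Theorem lemma7 (R : pzRingType) (d : Order.disp_t) (P : finPOrderType d) :
  right_Morita R ->
  forall X : rep R P, fg_rep X ->
    (exists (RX : rep R P) (r : rep_hom RX X),
        [/\ subspace_rep RX, fg_rep RX &
            forall (Z : rep R P) (f : rep_hom Z X), subspace_rep Z ->
              exists g : rep_hom Z RX,
                forall i z, hom_fun r i (hom_fun g i z) = hom_fun f i z]) /\
    (exists (LX : rep R P) (l : rep_hom X LX),
        [/\ subspace_rep LX, fg_rep LX &
            forall (Z : rep R P) (f : rep_hom X Z), subspace_rep Z ->
              exists g : rep_hom LX Z,
                forall i x, hom_fun g i (hom_fun l i x) = hom_fun f i x]).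
Proof.
move=> hmor X hfg.
have [E [iota [hE hfE hiota]]] := fin_gen_family_embeds
  (right_artinian_conv hmor.1) (right_Morita_simple_embeds hmor) (fun m => hfg (Some m)).
have iota_lin m : lin (iota m) := (hiota m).1.
have iota_inj m : injective (iota m) := (hiota m).2.
split.
  exists (RX iota_lin), (from_RX iota_lin); split.
  - exact: RX_subspace iota_inj.
  - exact: RX_fg hfE hfg.
  - by move=> Z f; apply: RX_factor.
exists (LX X), (to_LX X); split.
- exact: LX_subspace.
- exact: LX_fg.
- by move=> Z f; apply: LX_factor.
Qed.
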